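(* Let $\{X_m\}$ be nonnegative random variables and $b_m>0$ with $b_m\to\infty$. (a) Suppose there are $p>1$ and $C_0>0$ such that for every $\beta>0$, $\limsup_{m\to\infty}b_m^{-1}\log\mathbb{E}\exp\{\beta X_m\}\le C_0\beta^p$ and $\liminf_{m\to\infty}b_m^{-1}\log\mathbb{E}\exp\{\beta b_m^{1/2}X_m^{1/2}\}\ge\frac{p+1}{p}(pC_0)^{1/(p+1)}(\beta/2)^{2p/(p+1)}$. Then $\lim_{m\to\infty}b_m^{-1}\log\mathbb{E}\exp\{\beta X_m\}=C_0\beta^p$ for all $\beta>0$. (b) The same conclusion holds if instead, for every $\beta>0$, $\limsup_{m\to\infty}b_m^{-1}\log\mathbb{E}\exp\{\beta X_m\}<\infty$ and $\lim_{m\to\infty}b_m^{-1}\log\mathbb{E}\exp\{\beta b_m^{1/2}X_m^{1/2}\}=\frac{p+1}{p}(pC_0)^{1/(p+1)}(\beta/2)^{2p/(p+1)}$, for some $p>1$, $C_0>0$. *)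

From HB Require Import structures.
From mathcomp Require Import all_boot all_order all_algebra.
From mathcomp Require Import all_classical all_reals all_analysis.
Set Implicit Arguments. Unset Strict Implicit. Unset Printing Implicit Defensive.
Import Order.TTheory GRing.Theory Num.Theory.
Import numFieldNormedType.Exports.
Local Open Scope classical_set_scope.
Local Open Scope ring_scope.
Local Open Scope ereal_scope.

Definition eln {R : realType} (x : \bar R) : \bar R :=
  match x with
  | r%:E => (ln r)%:E
  | +oo => +oo
  | -oo => -oo
  end.

Definition Eexp {d} {T : measurableType d} {R : realType}
  (P : probability T R) (Y : T -> R) : \bar R :=
  \int[P]_x (expR (Y x))%:E.

Definition scaled_log_mgf {d} {T : measurableType d} {R : realType}
  (P : probability T R) (b : nat -> R) (Y : nat -> T -> R) (m : nat) : \bar R :=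
  ((b m)^-1)%:E * eln (Eexp P (Y m)).

From HB Require Import structures.
From mathcomp Require Import all_boot all_order all_algebra.
From mathcomp Require Import all_classical all_reals all_analysis.
From mathcomp Require Import measurable_realfun lra ring.
Import Order.TTheory GRing.Theory Num.Theory.
Import numFieldNormedType.Exports.
Local Open Scope classical_set_scope.
Local Open Scope ring_scope.

(* Young's inequality a sqrt(b X) <= a^2 b / (4 th) + th X gives
   Lsq a <= a^2 / (4 th) + L th, and the rate in the hypotheses is the dual
   function inf_(th > 0) (C0 th^p + a^2 / (4 th)); choosing the optimal a turns
   the lower bound on Lsq into liminf L th >= C0 th^p.  For (b), the converse
   bound comes from a grid: on each cell of width h sqrt b of the range of
   sqrt X, the convex function th X = th (sqrt X)^2 lies below its chord, an
   affine function alpha_i sqrt (b X) - b c_i, so E exp(th X) is bounded by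
   finitely many terms exp(-b c_i) E exp(alpha_i sqrt (b X)), each at most
   exp(b (C0 th^p + O(e))) by the limits of Lsq and duality, plus a tail
   beyond the grid that limsup L (2 th) < oo makes negligible.  A fixed
   number of terms only costs ln(N + 2) / b -> 0. *)

Section real_inequalities.
Context {R : realType}.
Implicit Types p q x th a u v s d e : R.

Lemma powR_le_affine q x : 0 < q < 1 -> 0 <= x -> x `^ q <= q * x + (1 - q).
Proof.
move=> /andP[q0 q1] x0.
have q'0 : 0 < 1 - q by rewrite subr_gt0.
have pq : q^-1^-1 + (1 - q)^-1^-1 = 1 by rewrite !invrK subrKC.
have := conjugate_powR (powR_ge0 x q) ler01 _ _ pq; rewrite !invr_gt0 => /(_ q0 q'0).
by rewrite mulr1 -powRrM mulfV ?gt_eqF // powRr1 // powR1 !invrK mulrC mul1r.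
Qed.

Lemma powRS x p : 0 < x -> x `^ (p + 1) = x `^ p * x.
Proof. by move=> x0; rewrite powRD ?powRr1 ?ltW // (gt_eqF x0) implybT. Qed.

Lemma young_sqr th u v : 0 < th -> u * v <= u ^+ 2 / (4 * th) + th * v ^+ 2.
Proof.
move=> th0; rewrite -subr_ge0.
have -> : u ^+ 2 / (4 * th) + th * v ^+ 2 - u * v = (u - 2 * th * v) ^+ 2 / (4 * th).
  by field; rewrite gt_eqF.
by rewrite divr_ge0 ?sqr_ge0 // mulr_ge0 // ltW.
Qed.

Lemma sqr_le_chord x u v : u <= x <= v -> x ^+ 2 <= (u + v) * x - u * v.
Proof.
move=> /andP[ux xv]; rewrite -subr_ge0.
have -> : (u + v) * x - u * v - x ^+ 2 = (x - u) * (v - x) by ring.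
by rewrite mulr_ge0 // subr_ge0.
Qed.

(* Cutting [0, (N+1) d] into cells of length d and bounding [s^2] on each
   cell by its chord; beyond the last cell [s^2 <= 2 s^2 - ((N+1) d)^2]. *)
Lemma expR_sqr_le_grid th d s (N : nat) : 0 < th -> 0 < d -> 0 <= s ->
  expR (th * s ^+ 2) <=
    \sum_(i < N.+1) expR (th * (2 * i%:R + 1) * d * s - th * (i%:R * (i%:R + 1)) * d ^+ 2)
    + expR (2 * th * s ^+ 2 - th * (N.+1%:R * d) ^+ 2).
Proof.
move=> th0 d0 s0.
have cell (i : nat) : i%:R * d <= s <= (i%:R + 1) * d ->
    th * s ^+ 2 <= th * (2 * i%:R + 1) * d * s - th * (i%:R * (i%:R + 1)) * d ^+ 2.
  move=> /sqr_le_chord /(ler_wpM2l (ltW th0)) /le_trans; apply.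
  by rewrite le_eqVlt; apply/predU1P; left; ring.
have sum_ge0 (n : nat) (F : 'I_n -> R) : 0 <= \sum_(i < n) expR (F i).
  by apply: sumr_ge0 => i _; exact: expR_ge0.
have [sN|Ns] := lerP s (N.+1%:R * d); last first.
  apply: ler_wpDl; first exact: sum_ge0.
  rewrite ler_expR.
  have : (N.+1%:R * d) ^+ 2 <= s ^+ 2.
    by rewrite ler_sqr ?nnegrE ?(ltW Ns) // mulr_ge0 // ltW.
  by move=> /(ler_wpM2l (ltW th0)); lra.
apply: ler_wpDr; first exact: expR_ge0.
elim: N sN => [|N IH] sN.
  by rewrite big_ord1 ler_expR cell // mul0r s0 add0r mul1r -[d]mul1r.
rewrite big_ord_recr /=.
have [sN'|Ns] := lerP s (N.+1%:R * d).
  by apply: ler_wpDr; [exact: expR_ge0 | exact: IH].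
by apply: ler_wpDl; [exact: sum_ge0 | rewrite ler_expR cell // natr1 (ltW Ns)].
Qed.

Lemma natr_mul_expR_le (n : nat) x e d : 0 < e -> (0 < n)%N -> ln n%:R / e <= x ->
  n%:R * expR (x * d) <= expR (x * (d + e)).
Proof.
move=> e_gt0 n_gt0 lnn_le; rewrite mulrDr expRD mulrC ler_wpM2l ?expR_ge0 //.
by rewrite -[leLHS]lnK ?posrE ?ltr0n // ler_expR -ler_pdivrMr // mulrC.
Qed.

Lemma exists_nat_le_mul_sqr x th d : 0 < th -> 0 < d ->
  exists N : nat, x <= th * (N.+1%:R * d) ^+ 2.
Proof.
move=> th_gt0 d_gt0; have thd_gt0 : 0 < th * d ^+ 2 by rewrite mulr_gt0 ?exprn_gt0.
have bound_ge0 : 0 <= `|x| / (th * d ^+ 2) by rewrite divr_ge0 // ltW.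
set n := Num.bound (`|x| / (th * d ^+ 2)); exists n.
have xn := ltW (archi_boundP bound_ge0); rewrite ler_pdivrMr // in xn.
apply: le_trans (ler_norm x) (le_trans xn _).
have -> : th * (n.+1%:R * d) ^+ 2 = n.+1%:R ^+ 2 * (th * d ^+ 2) by ring.
apply: ler_wpM2r; first exact: ltW.
by rewrite -natrX ler_nat (leq_trans (leqnSn n)) // leq_pmull.
Qed.

End real_inequalities.

(* [sqrt_rate p C0 a = inf_(th > 0) (C0 th^p + a^2 / (4 th))], the infimum
   being attained where [a = 2 sqrt (p C0 th^(p+1))]. *)
Definition sqrt_rate {R : realType} (p C0 a : R) : R :=
  (p + 1) / p * (p * C0) `^ (1 / (p + 1)) * (a / 2) `^ (2 * p / (p + 1)).

Section sqrt_rate.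
Context {R : realType} {p C0 : R}.
Hypotheses (p_gt1 : 1 < p) (C0_gt0 : 0 < C0).

Let p_gt0 : 0 < p. Proof. exact: lt_trans ltr01 p_gt1. Qed.
Let p1_gt0 : 0 < p + 1. Proof. by rewrite addr_gt0. Qed.

Lemma sqrt_rateE {th a : R} : 0 < th -> 0 < a ->
  sqrt_rate p C0 a =
    (p + 1) * C0 * th `^ p * ((a / 2) ^+ 2 / (p * C0 * th `^ (p + 1))) `^ (p / (p + 1)).
Proof.
move=> th0 a0; rewrite /sqrt_rate.
set q := p / (p + 1).
have -> : 2 * p / (p + 1) = 2 * q by rewrite /q mulrA.
rewrite powRrM powR_mulrn; last by rewrite divr_ge0 // ltW.
set u := (a / 2) ^+ 2; set u0 := p * C0 * th `^ (p + 1).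
have u_gt0 : 0 < u by rewrite exprn_gt0 // divr_gt0.
have u0_gt0 : 0 < u0 by rewrite !mulr_gt0 // powR_gt0.
have -> : u `^ q = (u / u0) `^ q * u0 `^ q.
  by rewrite -powRM ?divr_ge0 ?ltW // mulrVK // unitfE gt_eqF.
have -> : u0 `^ q = (p * C0) `^ q * th `^ p.
  rewrite /u0 powRM ?mulr_ge0 ?powR_ge0 ?ltW //; congr (_ * _).
  by rewrite -powRrM; congr (_ `^ _); rewrite /q; field; rewrite gt_eqF.
have -> : 1 / (p + 1) = 1 - q by rewrite /q; field; rewrite gt_eqF.
have pC0E : (p * C0) `^ (1 - q) * (p * C0) `^ q = p * C0.
  by rewrite -powRD ?subrK ?powRr1 ?mulr_ge0 ?ltW // oner_eq0.
move: pC0E; set A := (p * C0) `^ (1 - q); set B := (p * C0) `^ q => pC0E.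
apply: etrans (_ : _ = (p + 1) / p * (A * B) * th `^ p * (u / u0) `^ q) _; first ring.
by rewrite pC0E; field; rewrite gt_eqF.
Qed.

Lemma sqrt_rate_le {th a : R} : 0 < th -> 0 < a ->
  sqrt_rate p C0 a <= C0 * th `^ p + a ^+ 2 / (4 * th).
Proof.
move=> th0 a0; rewrite (sqrt_rateE th0 a0).
have thp_gt0 : 0 < th `^ p by rewrite powR_gt0.
have q01 : 0 < p / (p + 1) < 1 by rewrite divr_gt0 //= ltr_pdivrMr // mul1r; lra.
have x_ge0 : 0 <= (a / 2) ^+ 2 / (p * C0 * th `^ (p + 1)).
  by rewrite divr_ge0 ?sqr_ge0 // !mulr_ge0 ?powR_ge0 ?ltW.
have c_ge0 : 0 <= (p + 1) * C0 * th `^ p by rewrite !mulr_ge0 // ltW.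
have := ler_wpM2l c_ge0 (powR_le_affine _ _ q01 x_ge0); move=> /le_trans; apply.
by rewrite powRS // le_eqVlt; apply/predU1P; left; field; rewrite !gt_eqF.
Qed.

Lemma sqrt_rate_opt {th : R} : 0 < th ->
  let a := 2 * Num.sqrt (p * C0 * th `^ (p + 1)) in
  0 < a /\ sqrt_rate p C0 a = C0 * th `^ p + a ^+ 2 / (4 * th).
Proof.
move=> th0 a.
have u0_gt0 : 0 < p * C0 * th `^ (p + 1) by rewrite !mulr_gt0 // powR_gt0.
have a_gt0 : 0 < a by rewrite mulr_gt0 // sqrtr_gt0.
split => //; rewrite (sqrt_rateE th0 a_gt0).
have a2E : (a / 2) ^+ 2 = p * C0 * th `^ (p + 1).
  by rewrite /a mulrC mulKf // sqr_sqrtr // ltW.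
have -> : a ^+ 2 = 4 * (a / 2) ^+ 2 by field.
by rewrite a2E divff ?gt_eqF // powR1 powRS //; field; rewrite gt_eqF.
Qed.

End sqrt_rate.

Local Open Scope ereal_scope.

Section limn_einf_esup.
Context {R : realType}.
Implicit Types (u v : (\bar R)^nat) (l : \bar R).

Lemma le_limn_einf u v : (forall n, u n <= v n) -> limn_einf u <= limn_einf v.
Proof.
move=> uv; rewrite !limn_einf_lim; apply: lee_lim; [exact: is_cvg_einfs..|].
apply: nearW => n /=; apply: le_ereal_inf_tmp => _ [k /= nk <-].
by apply: le_trans (uv k); apply: ereal_inf_lbound; exists k.
Qed.

Lemma limn_esup_le_near u l : (\forall n \near \oo, u n <= l) -> limn_esup u <= l.
Proof.
move=> [N _ HN]; rewrite limn_esup_lim; apply: lime_le; first exact: is_cvg_esups.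
near=> n; apply: ge_ereal_sup => _ [k /= nk <-]; apply: HN => /=.
by apply: leq_trans nk; near: n; exists N.
Unshelve. all: by end_near. Qed.

Lemma limn_esup_lty_bounded {u} : limn_esup u < +oo ->
  exists M : R, \forall n \near \oo, u n <= M%:E.
Proof.
rewrite /limn_esup /limf_esup => /ereal_inf_lt[_ [V FV <-] hV].
exists (fine (ereal_sup (u @` V))); move: FV; apply: filterS => n Vn.
have un : u n <= ereal_sup (u @` V) by apply: ereal_sup_ubound; exists n.
move: hV un; case: (ereal_sup (u @` V)) => [r| |] //= _.
by rewrite leeNy_eq => /eqP ->; rewrite leNye.
Qed.

Lemma limn_einf_esup_cvg u l :
  l <= limn_einf u -> limn_esup u <= l -> u @ \oo --> l.
Proof.
move=> lu ul.
have einfE : limn (einfs u) = l.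
  apply/eqP; rewrite eq_le -limn_einf_lim lu andbT.
  exact: le_trans (limn_einf_sup u) ul.
have esupE : limn (esups u) = l.
  apply/eqP; rewrite eq_le -limn_esup_lim ul /=.
  exact: le_trans lu (limn_einf_sup u).
apply: (@squeeze_cvge _ _ _ _ (einfs u) _ (esups u)).
- apply: nearW => n; apply/andP; split.
  + by apply: ereal_inf_lbound; exists n => /=.
  + by apply: ereal_sup_ubound; exists n => /=.
- by rewrite -einfE; exact: is_cvg_einfs.
- by rewrite -esupE; exact: is_cvg_esups.
Qed.

Lemma cvg_EFin_near_le u (l e : R) : u @ \oo --> l%:E -> (0 < e)%R ->
  \forall n \near \oo, u n <= (l + e)%:E.
Proof.
move=> /fine_cvgP[u_fin ul] e_gt0.
have := @cvgr_le _ _ _ _ _ _ ul (l + e)%R; rewrite ltrDl e_gt0 => /(_ _ isT) ule.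
near=> n; have /fineK <- : u n \is a fin_num by near: n.
by rewrite lee_fin; near: n.
Unshelve. all: by end_near. Qed.

End limn_einf_esup.

Section scaled_eln.
Context {R : realType}.
Implicit Types (E : \bar R) (b c r : R).

Lemma scaled_eln_le E1 E2 b c : (0 < b)%R -> 1 <= E1 -> 1 <= E2 ->
  E1 <= (expR (b * c))%:E * E2 ->
  (b^-1)%:E * eln E1 <= c%:E + (b^-1)%:E * eln E2.
Proof.
move=> b_gt0 E1_ge1 E2_ge1 E12.
case: E2 E2_ge1 E12 => [r| |] E2_ge1 E12; last 2 first.
- by rewrite /= gt0_muley ?lte_fin ?invr_gt0 // addey ?leey.
- by move: E2_ge1; rewrite leeNy_eq.
case: E1 E1_ge1 E12 => [s| |] E1_ge1 E12; last 2 first.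
- by move: E12; rewrite leye_eq -EFinM.
- by move: E1_ge1; rewrite leeNy_eq.
rewrite !lee_fin in E1_ge1 E2_ge1; rewrite -EFinM lee_fin in E12.
rewrite /= -!EFinM -EFinD lee_fin.
have r_gt0 : (0 < r)%R by lra.
have s_gt0 : (0 < s)%R by lra.
have lnE12 : (ln s <= b * c + ln r)%R.
  rewrite -[X in (_ <= X + _)%R]expRK -lnM ?posrE ?expR_gt0 //.
  by rewrite ler_ln ?posrE ?mulr_gt0 ?expR_gt0.
have bV_ge0 : (0 <= b^-1)%R by rewrite invr_ge0 ltW.
have := ler_wpM2l bV_ge0 lnE12.
by rewrite mulrDr mulrA mulVf ?gt_eqF // mul1r.
Qed.

Lemma le_expR_scaled_eln E b r : (0 < b)%R -> 1 <= E ->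
  (b^-1)%:E * eln E <= r%:E -> E <= (expR (b * r))%:E.
Proof.
move=> b_gt0 E_ge1 Er.
case: E E_ge1 Er => [s| |] E_ge1 Er; last 2 first.
- by rewrite /= gt0_muley ?lte_fin ?invr_gt0 // in Er.
- by move: E_ge1; rewrite leeNy_eq.
rewrite /= -EFinM lee_fin in Er; rewrite lee_fin in E_ge1; rewrite lee_fin.
have s_gt0 : (0 < s)%R by lra.
rewrite -(lnK s_gt0) ler_expR.
have := ler_wpM2l (ltW b_gt0) Er.
by rewrite mulrA mulfV ?gt_eqF // mul1r.
Qed.

End scaled_eln.

Section Eexp_bounds.
Context {d} {T : measurableType d} {R : realType} (P : probability T R).
Implicit Types (Y Z W : T -> R) (c : R).

Lemma measurable_EFin_expR Y : measurable_fun setT Y ->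
  measurable_fun setT (fun x => (expR (Y x))%:E).
Proof. by move=> mY; apply/measurable_EFinP; exact: measurableT_comp mY. Qed.

Lemma Eexp_ge1 Y : measurable_fun setT Y -> (forall x, 0 <= Y x)%R -> 1 <= Eexp P Y.
Proof.
move=> mY Y_ge0; rewrite /Eexp.
have -> : 1 = \int[P]_x (cst 1%:E) x.
  by rewrite integral_cst // mul1e; apply/esym; exact: probability_setT.
apply: ge0_le_integral => //; first exact: measurable_EFin_expR.
by move=> x _; rewrite lee_fin /= -expR0 ler_expR.
Qed.

Lemma Eexp_le_shift Y Z c : measurable_fun setT Y -> measurable_fun setT Z ->
  (forall x, Y x <= c + Z x)%R -> Eexp P Y <= (expR c)%:E * Eexp P Z.
Proof.
move=> mY mZ YZ; rewrite /Eexp -ge0_integralZl //; last exact: measurable_EFin_expR.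
apply: ge0_le_integral => //.
- exact: measurable_EFin_expR.
- by apply: measurable_funeM; exact: measurable_EFin_expR.
- by move=> x _; rewrite -EFinM lee_fin -expRD ler_expR.
Qed.

Lemma Eexp_le_sum (N : nat) Y W (Z : 'I_N -> T -> R) (a : 'I_N -> R) c :
  measurable_fun setT Y -> measurable_fun setT W ->
  (forall i, measurable_fun setT (Z i)) ->
  (forall x, expR (Y x) <= \sum_(i < N) expR (a i + Z i x) + expR (c + W x))%R ->
  Eexp P Y <= \sum_(i < N) (expR (a i))%:E * Eexp P (Z i) + (expR c)%:E * Eexp P W.
Proof.
move=> mY mW mZ YZW; rewrite /Eexp.
have mshift (c' : R) (V : T -> R) : measurable_fun setT V ->
    measurable_fun setT (fun x => (expR (c' + V x))%:E).
  by move=> mV; apply: measurable_EFin_expR; exact: measurable_funD.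
have integral_shift (c' : R) (V : T -> R) : measurable_fun setT V ->
    \int[P]_x (expR (c' + V x))%:E = (expR c')%:E * \int[P]_x (expR (V x))%:E.
  move=> mV; rewrite -ge0_integralZl //; last exact: measurable_EFin_expR.
  by apply: eq_integral => x _; rewrite -EFinM expRD.
apply: le_trans (_ : _ <= \int[P]_x (\sum_(i < N) (expR (a i + Z i x))%:E
   + (expR (c + W x))%:E)) _.
  apply: ge0_le_integral => //.
  - exact: measurable_EFin_expR.
  - by apply: emeasurable_funD; [apply: emeasurable_sum => i|]; exact: mshift.
  - by move=> x _; rewrite sumEFin -EFinD lee_fin.
rewrite ge0_integralD //; first last.
- exact: mshift.
- by apply: emeasurable_sum => i; exact: mshift.
- by move=> x _; apply: sume_ge0 => i _; rewrite lee_fin expR_ge0.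
rewrite ge0_integral_sum //; last by move=> i; exact: mshift.
rewrite integral_shift //.
by apply: leeD => //; apply: lee_sum => i _; rewrite integral_shift.
Qed.

End Eexp_bounds.

Section scaled_log_mgf.
Context {d} {T : measurableType d} {R : realType} {P : probability T R}.
Context {b : nat -> R}.
Hypothesis b_gt0 : forall m, (0 < b m)%R.
Implicit Types (Y Z : nat -> T -> R) (c r : R).

Lemma scaled_log_mgf_le_shift Y Z c m :
  measurable_fun setT (Y m) -> measurable_fun setT (Z m) ->
  (forall x, 0 <= Y m x)%R -> (forall x, 0 <= Z m x)%R ->
  (forall x, Y m x <= b m * c + Z m x)%R ->
  scaled_log_mgf P b Y m <= c%:E + scaled_log_mgf P b Z m.
Proof.
move=> mY mZ Y_ge0 Z_ge0 YZ; apply: scaled_eln_le => //; try exact: Eexp_ge1.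
exact: Eexp_le_shift.
Qed.

Lemma Eexp_le_scaled_log_mgf {Y r m} : scaled_log_mgf P b Y m <= r%:E ->
  measurable_fun setT (Y m) -> (forall x, 0 <= Y m x)%R ->
  Eexp P (Y m) <= (expR (b m * r))%:E.
Proof. by move=> + mY Y_ge0; apply: le_expR_scaled_eln => //; exact: Eexp_ge1. Qed.

Lemma scaled_log_mgf_le {Y r m} : Eexp P (Y m) <= (expR (b m * r))%:E ->
  measurable_fun setT (Y m) -> (forall x, 0 <= Y m x)%R ->
  scaled_log_mgf P b Y m <= r%:E.
Proof.
move=> Yr mY Y_ge0; have := @scaled_eln_le _ _ 1 _ r (b_gt0 m) (Eexp_ge1 P _ mY Y_ge0) (lexx _).
by rewrite mule1 /= ln1 mule0 adde0; apply.
Qed.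

End scaled_log_mgf.

Local Close Scope ereal_scope.

Section log_mgf_bounds.
Context {d : measure_display} {T : measurableType d} {R : realType}.
Context {P : probability T R} {X : nat -> T -> R} {b : nat -> R} {p C0 : R}.
Hypotheses (mX : forall m, measurable_fun setT (X m))
  (X_ge0 : forall m x, 0 <= X m x) (b_gt0 : forall m, 0 < b m)
  (p_gt1 : 1 < p) (C0_gt0 : 0 < C0).

Local Notation L beta := (scaled_log_mgf P b (fun m x => beta * X m x)).
Local Notation Lsq beta :=
  (scaled_log_mgf P b (fun m x => beta * Num.sqrt (b m) * Num.sqrt (X m x))).

Let mL beta m : measurable_fun setT (fun x => beta * X m x).
Proof. by apply: measurable_funM => //; exact: measurable_cst. Qed.

Let mLsq beta m : measurable_fun setT (fun x => beta * Num.sqrt (b m) * Num.sqrt (X m x)).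
Proof.
apply: measurable_funM; first exact: measurable_cst.
exact: measurableT_comp (continuous_measurable_fun (@sqrt_continuous R)) (mX m).
Qed.

Let L_ge0 beta m x : 0 <= beta -> 0 <= beta * X m x.
Proof. by move=> beta_ge0; rewrite mulr_ge0. Qed.

Let Lsq_ge0 beta m x : 0 <= beta -> 0 <= beta * Num.sqrt (b m) * Num.sqrt (X m x).
Proof. by move=> beta_ge0; rewrite !mulr_ge0 ?sqrtr_ge0. Qed.

Lemma Lsq_le_L {th a : R} : 0 < th -> 0 < a ->
  forall m, (Lsq a m <= (a ^+ 2 / (4 * th))%:E + L th m)%E.
Proof.
move=> th_gt0 a_gt0 m; apply: scaled_log_mgf_le_shift => //; try by move=> x; apply/L_ge0/ltW.
- by move=> x; exact/Lsq_ge0/ltW.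
move=> x; have := young_sqr th (a * Num.sqrt (b m)) (Num.sqrt (X m x)) th_gt0.
by rewrite exprMn !sqr_sqrtr ?(ltW (b_gt0 m)) // mulrA [b m * _]mulrC.
Qed.

Lemma limn_einf_L_ge :
  (forall a, 0 < a -> ((sqrt_rate p C0 a)%:E <= limn_einf (Lsq a))%E) ->
  forall th, 0 < th -> ((C0 * th `^ p)%:E <= limn_einf (L th))%E.
Proof.
move=> rate_le_Lsq th th_gt0.
have [a_gt0 rate_aE] := sqrt_rate_opt p_gt1 C0_gt0 th_gt0.
move: a_gt0 rate_aE; set a := 2 * Num.sqrt _ => a_gt0 rate_aE.
have := le_limn_einf _ _ (Lsq_le_L th_gt0 a_gt0).
rewrite limn_einf_shift // => /(le_trans (rate_le_Lsq a a_gt0)).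
by rewrite rate_aE EFinD addeC leeD2lE.
Qed.

Lemma Eexp_le_grid {th h : R} (N m : nat) : 0 < th -> 0 < h ->
  (Eexp P (fun x => th * X m x)%R <=
    \sum_(i < N.+1) (expR (- (b m * (th * (i%:R * (i%:R + 1)) * h ^+ 2))))%:E *
      Eexp P (fun x => th * (2 * i%:R + 1) * h * Num.sqrt (b m) * Num.sqrt (X m x))%R
    + (expR (- (b m * (th * (N.+1%:R * h) ^+ 2))))%:E *
      Eexp P (fun x => 2 * th * X m x)%R)%E.
Proof.
move=> th_gt0 h_gt0; apply: Eexp_le_sum => // x.
have hb_gt0 : 0 < h * Num.sqrt (b m) by rewrite mulr_gt0 // sqrtr_gt0.
have := expR_sqr_le_grid _ _ _ N th_gt0 hb_gt0 (sqrtr_ge0 (X m x)).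
rewrite !exprMn !sqr_sqrtr ?(ltW (b_gt0 m)) //; move/le_trans; apply.
apply: lerD; first apply: ler_sum => i _.
all: by rewrite le_eqVlt; apply/predU1P; left; congr expR; ring.
Qed.

Lemma grid_cell_le {th h e : R} {i m : nat} : 0 < th -> 0 < h -> th * h ^+ 2 = 4 * e ->
  let a := th * (2 * i%:R + 1) * h in
  (Lsq a m <= (sqrt_rate p C0 a + e)%:E)%E ->
  ((expR (- (b m * (th * (i%:R * (i%:R + 1)) * h ^+ 2))))%:E *
    Eexp P (fun x => a * Num.sqrt (b m) * Num.sqrt (X m x))%R
    <= (expR (b m * (C0 * th `^ p + 2 * e)))%:E)%E.
Proof.
move=> th_gt0 h_gt0 thh2E a Lsq_a.
have a_gt0 : 0 < a by rewrite !mulr_gt0 // ltr_pwDr // mulr_ge0.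
have := Eexp_le_scaled_log_mgf b_gt0 Lsq_a (mLsq a m) (fun x => Lsq_ge0 a m x (ltW a_gt0)).
move=> /(lee_wpmul2l (expR_ge0 _ : (0 <= _%:E)%E)) /le_trans; apply.
rewrite -EFinM lee_fin -expRD ler_expR -mulrN -mulrDr ler_pM2l //.
have := sqrt_rate_le p_gt1 C0_gt0 th_gt0 a_gt0.
(* the cost of cell i is e ((2 i + 1)^2 - 4 i (i + 1) + 1) = 2 e *)
have -> : a ^+ 2 / (4 * th) = e * (2 * i%:R + 1) ^+ 2.
  have -> : e = th * h ^+ 2 / 4 by rewrite thh2E; field.
  by rewrite /a; field; rewrite gt_eqF.
have -> : th * (i%:R * (i%:R + 1)) * h ^+ 2 = 4 * e * (i%:R * (i%:R + 1)).
  by rewrite -thh2E; ring.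
lra.
Qed.

Lemma grid_tail_le {th h M : R} {N m : nat} : 0 < th -> M <= th * (N.+1%:R * h) ^+ 2 ->
  (L (2 * th) m <= M%:E)%E ->
  ((expR (- (b m * (th * (N.+1%:R * h) ^+ 2))))%:E *
    Eexp P (fun x => 2 * th * X m x)%R <= 1)%E.
Proof.
move=> th_gt0 MN L2th_M.
have th2_ge0 : 0 <= 2 * th by rewrite mulr_ge0 // ltW.
have := Eexp_le_scaled_log_mgf b_gt0 L2th_M (mL _ m) (fun x => L_ge0 _ m x th2_ge0).
move=> /(lee_wpmul2l (expR_ge0 _ : (0 <= _%:E)%E)) /le_trans; apply.
rewrite -EFinM lee_fin -expRD expR_le1 -mulrN -mulrDr.
by rewrite pmulr_rle0 // addrC subr_le0.
Qed.

Lemma L_le_near {th e : R} : b @ \oo --> +oo ->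
  (forall beta, 0 < beta -> (limn_esup (L beta) < +oo)%E) ->
  (forall beta, 0 < beta -> Lsq beta @ \oo --> (sqrt_rate p C0 beta)%:E) ->
  0 < th -> 0 < e ->
  \forall m \near \oo, (L th m <= (C0 * th `^ p + 3 * e)%:E)%E.
Proof.
move=> b_oo L_bdd Lsq_cvg th_gt0 e_gt0.
(* The mesh h makes each cell cost 2 e; N is chosen so that the tail beyond
   the grid is killed by the eventual bound M on L (2 th). *)
have [h h_gt0 thh2E] : exists2 h, 0 < h & th * h ^+ 2 = 4 * e.
  exists (2 * Num.sqrt (e / th)); first by rewrite mulr_gt0 // sqrtr_gt0 divr_gt0.
  by rewrite exprMn sqr_sqrtr ?divr_ge0 ?ltW //; field; rewrite gt_eqF.
have th2_gt0 : 0 < 2 * th by rewrite mulr_gt0.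
have [M L2th_M] := limn_esup_lty_bounded (L_bdd _ th2_gt0).
have [N MN] := exists_nat_le_mul_sqr M _ _ th_gt0 h_gt0.
have a_gt0 (i : nat) : 0 < th * (2 * i%:R + 1) * h.
  by rewrite !mulr_gt0 // ltr_pwDr // mulr_ge0.
have Lsq_near : \forall m \near \oo, forall i : 'I_N.+1,
    (Lsq (th * (2 * i%:R + 1) * h) m <= (sqrt_rate p C0 (th * (2 * i%:R + 1) * h) + e)%:E)%E.
  by apply: filter_forall => i; apply: cvg_EFin_near_le e_gt0; exact: Lsq_cvg (a_gt0 i).
have b_ge : \forall m \near \oo, ln N.+2%:R / e <= b m by move/cvgryPge : b_oo; apply.
near=> m.
have Lsq_m : forall i : 'I_N.+1, (Lsq (th * (2 * i%:R + 1) * h) m <=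
    (sqrt_rate p C0 (th * (2 * i%:R + 1) * h) + e)%:E)%E by near: m.
have b_m : ln N.+2%:R / e <= b m by near: m.
have L2th_m : (L (2 * th) m <= M%:E)%E by near: m.
set D := C0 * th `^ p + 2 * e.
apply: (scaled_log_mgf_le b_gt0) (mL _ _) (fun x => L_ge0 _ m x (ltW th_gt0)).
apply: le_trans (Eexp_le_grid N m th_gt0 h_gt0) _.
apply: le_trans (_ : _ <= \sum_(i < N.+1) (expR (b m * D))%:E + 1)%E _.
  apply: leeD; last exact: grid_tail_le th_gt0 MN L2th_m.
  by apply: lee_sum => i _; exact: grid_cell_le th_gt0 h_gt0 thh2E (Lsq_m i).
rewrite sumEFin -EFinD lee_fin sumr_const card_ord.
have -> : C0 * th `^ p + 3 * e = D + e by rewrite /D; ring.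
apply: le_trans (natr_mul_expR_le _ _ _ D e_gt0 (ltn0Sn _) b_m).
have D_ge0 : 0 <= D by rewrite addr_ge0 ?mulr_ge0 ?powR_ge0 ?ltW.
by rewrite mulr_natl [in leRHS]mulrSr lerD2l -expR0 ler_expR mulr_ge0 // ltW.
Unshelve. all: by end_near. Qed.

Lemma limn_esup_L_le : b @ \oo --> +oo ->
  (forall beta, 0 < beta -> (limn_esup (L beta) < +oo)%E) ->
  (forall beta, 0 < beta -> Lsq beta @ \oo --> (sqrt_rate p C0 beta)%:E) ->
  forall th, 0 < th -> (limn_esup (L th) <= (C0 * th `^ p)%:E)%E.
Proof.
move=> b_oo L_bdd Lsq_cvg th th_gt0; apply/lee_addgt0Pr => e e_gt0.
have e3_gt0 : 0 < e / 3 by rewrite divr_gt0.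
apply: limn_esup_le_near; move: (L_le_near b_oo L_bdd Lsq_cvg th_gt0 e3_gt0).
by apply: filterS => m; rewrite [3 * _]mulrC divfK // EFinD.
Qed.

End log_mgf_bounds.

Theorem lemmaA2 (d : measure_display) (T : measurableType d) (R : realType)
  (P : probability T R) (X : nat -> T -> R) (b : nat -> R) (p C0 : R)
  (mX : forall m, measurable_fun setT (X m))
  (X_ge0 : forall m x, 0 <= X m x)
  (b_gt0 : forall m, 0 < b m)
  (b_oo : b @ \oo --> +oo)
  (hp : 1 < p) (hC0 : 0 < C0) :
  let L (beta : R) := scaled_log_mgf P b (fun m x => beta * X m x) in
  let Lsq (beta : R) :=
    scaled_log_mgf P b (fun m x => beta * Num.sqrt (b m) * Num.sqrt (X m x)) in
  let rate (beta : R) :=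
    (p + 1) / p * (p * C0) `^ (1 / (p + 1)) * (beta / 2) `^ (2 * p / (p + 1)) in
  ((forall beta, 0 < beta -> (limn_esup (L beta) <= (C0 * beta `^ p)%:E)%E) ->
   (forall beta, 0 < beta -> ((rate beta)%:E <= limn_einf (Lsq beta))%E) ->
   forall beta, 0 < beta -> L beta @ \oo --> (C0 * beta `^ p)%:E)
  /\
  ((forall beta, 0 < beta -> (limn_esup (L beta) < +oo)%E) ->
   (forall beta, 0 < beta -> Lsq beta @ \oo --> (rate beta)%:E) ->
   forall beta, 0 < beta -> L beta @ \oo --> (C0 * beta `^ p)%:E).
Proof.
move=> L Lsq rate.
have L_lower := limn_einf_L_ge mX X_ge0 b_gt0 hp hC0.
split=> [L_sup rate_le th th_gt0 | L_bdd Lsq_cvg th th_gt0];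
  apply: limn_einf_esup_cvg.
- exact: L_lower.
- exact: L_sup.
- apply: L_lower => // a a_gt0.
  by rewrite (cvg_limn_einf_sup (Lsq_cvg a a_gt0)).1.
- exact: limn_esup_L_le.
Qed.
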